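(* Let $N,M\ge 1$, let $(a_\ell[i])_{i=0}^{N-1}$, $(b_\ell[i])_{i=0}^{N-1}$ for $\ell=1,\dots,M$, and $(c[i])_{i=0}^{N-1}$ be sequences of nonnegative integers, and let $W$ be the maximum of all their entries. Build an undirected graph consisting of three paths $u_0-u_1-\cdots-u_{N-1}$, $v_0-v_1-\cdots-v_{N-1}$, $w_0-w_1-\cdots-w_{N-1}$ whose edges all have weight $0$, plus nodes $x_1,\dots,x_M$, and the following additional edges: for every $i\in\{0,\dots,N-1\}$ and $\ell\in\{1,\dots,M\}$, an edge $\{u_i,x_\ell\}$ of weight $5W-a_\ell[i]$; for every $j\in\{0,\dots,N-1\}$ and $\ell$, an edge $\{x_\ell,v_j\}$ of weight $5W-b_\ell[j]$; and for every $k\in\{0,\dots,N-1\}$, an edge $\{v_0,w_k\}$ of weight $5W+c[k]$. Then the minimum total weight of a $u_0$-$w_{N-1}$ path in this graph using at most $N+2$ edges is strictly less than $15W$ if and only if there exist $i,j,k\in\{0,\dots,N-1\}$ and $\ell\in\{1,\dots,M\}$ with $i+j\le k$ and $c[k]<a_\ell[i]+b_\ell[j]$.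
   Context: The weight of a path is the sum of its edge weights; the number of edges it uses is its number of hops. *)

From mathcomp Require Import all_boot.
Set Implicit Arguments. Unset Strict Implicit. Unset Printing Implicit Defensive.

(* Vertices: u_i, v_j, w_k (i,j,k : 'I_N) and x_l (l : 'I_M, standing for x_{l+1}). *)
Definition vtx (N M : nat) : finType := (('I_N + 'I_N) + 'I_N + 'I_M)%type.

Section Graph.
Variables (N M : nat).
Variables (a b : 'I_M -> 'I_N -> nat) (c : 'I_N -> nat).

Definition uV (i : 'I_N) : vtx N M := inl (inl (inl i)).
Definition vV (j : 'I_N) : vtx N M := inl (inl (inr j)).
Definition wV (k : 'I_N) : vtx N M := inl (inr k).
Definition xV (l : 'I_M) : vtx N M := inr l.

Definition Wmax : nat :=
  maxn (\max_(l : 'I_M) \max_(i : 'I_N) maxn (a l i) (b l i)) (\max_(k : 'I_N) c k).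

(* one orientation of every edge, with its weight *)
Definition dedge (x y : vtx N M) : option nat :=
  match x, y with
  | inl (inl (inl i)), inl (inl (inl i')) => if i'.+1 == i :> nat then Some 0 else None
  | inl (inl (inr j)), inl (inl (inr j')) => if j'.+1 == j :> nat then Some 0 else None
  | inl (inr k), inl (inr k') => if k'.+1 == k :> nat then Some 0 else None
  | inl (inl (inl i)), inr l => Some (5 * Wmax - a l i)
  | inr l, inl (inl (inr j)) => Some (5 * Wmax - b l j)
  | inl (inl (inr j)), inl (inr k) => if j == 0 :> nat then Some (5 * Wmax + c k) else None
  | _, _ => None
  end.

Definition edge (x y : vtx N M) : option nat :=
  match dedge x y with Some w => Some w | None => dedge y x end.

Fixpoint walk_weight (x : vtx N M) (p : seq (vtx N M)) : option nat :=
  match p with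
  | [::] => Some 0
  | y :: q => match edge x y, walk_weight y q with
              | Some e, Some r => Some (e + r)
              | _, _ => None
              end
  end.

Definition hop_path (s t : vtx N M) (h : nat) (p : seq (vtx N M)) (d : nat) : Prop :=
  [/\ uniq (s :: p), last s p = t, size p <= h & walk_weight s p = Some d].

Definition is_min_hop_dist (s t : vtx N M) (h d : nat) : Prop :=
  (exists p, hop_path s t h p d) /\ (forall p d', hop_path s t h p d' -> d <= d').

End Graph.

(* A walk to w_(N-1) of weight below 15W must use exactly one edge of each of
   the three weighted layers in the order u -> x_l -> v -> w: every other route
   crosses some layer twice and is too heavy.  Along the way it climbs the
   u-path to u_i, descends the v-path from v_j to v_0 and climbs the w-path from
   w_k, so a budget of N+2 hops forces i + j <= k, and its weight
   15W - a_l[i] - b_l[j] + c[k] is below 15W iff c[k] < a_l[i] + b_l[j].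
   Conversely such a quadruple yields exactly this path. *)

From Stdlib Require Import Classical.
From mathcomp Require Import all_boot zify.
Set Implicit Arguments. Unset Strict Implicit. Unset Printing Implicit Defensive.

Lemma ex_least_nat (P : nat -> Prop) n :
  P n -> exists d, P d /\ forall d', P d' -> d <= d'.
Proof.
elim/ltn_ind: n => n IH Pn.
have [[m [ltmn Pm]] | no_less] := classic (exists m, m < n /\ P m).
  exact: IH m ltmn Pm.
exists n; split=> // d' Pd'; rewrite leqNgt; apply/negP => ltd'n.
by apply: no_less; exists d'.
Qed.

Lemma path_iota (e : rel nat) m n :
  (forall x, m <= x < m + n -> e x x.+1) -> path e m (iota m.+1 n).
Proof.
elim: n m => [|n IH] m //= succ_e.
rewrite succ_e ?IH //=; last lia.
by move=> x /andP[ltmx ltx]; apply: succ_e; lia.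
Qed.

Lemma last_iota m n : last m (iota m.+1 n) = m + n.
Proof. by elim: n m => [|n IH] m /=; rewrite ?addn0 // IH addnS. Qed.

Fixpoint down (n : nat) : seq nat := if n is n'.+1 then n' :: down n' else [::].

Lemma mem_down n x : (x \in down n) = (x < n).
Proof. by elim: n => //= n IH; rewrite in_cons IH ltnS (leq_eqVlt x). Qed.

Lemma uniq_down n : uniq (down n).
Proof. by elim: n => //= n ->; rewrite mem_down ltnn. Qed.

Lemma size_down n : size (down n) = n.
Proof. by elim: n => //= n ->. Qed.

Lemma last_down n : last n (down n) = 0.
Proof. by elim: n. Qed.

Lemma path_down (e : rel nat) n : (forall x, x < n -> e x.+1 x) -> path e n (down n).
Proof. by elim: n => //= n IH pred_e; rewrite pred_e ?IH // => x /ltnW; apply: pred_e. Qed.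

Lemma mem_map_ctor (S T : eqType) (f : S -> T) v s :
  (forall x, f x != v) -> (v \in [seq f x | x <- s]) = false.
Proof.
by move=> neq_f; apply/mapP => -[x _ /eqP]; rewrite eq_sym (negbTE (neq_f x)).
Qed.

Lemma has_mem_map_ctor (S T : eqType) (s1 : seq T) (g : S -> T) s :
  (forall y, g y \in s1 = false) -> has (mem s1) [seq g y | y <- s] = false.
Proof. by move=> g_notin; apply/hasPn => _ /mapP[y _ ->]; apply/negbT/g_notin. Qed.

Section Reduction.

Variables (N M : nat) (a b : 'I_M -> 'I_N -> nat) (c : 'I_N -> nat).

Local Notation W := (Wmax a b c).
Local Notation edge := (edge a b c).
Local Notation walk_weight := (walk_weight a b c).

Lemma a_le_Wmax l i : a l i <= W.
Proof.
apply: leq_trans (leq_maxl _ _).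
apply: leq_trans (leq_bigmax l); apply: leq_trans (leq_bigmax i); exact: leq_maxl.
Qed.

Lemma b_le_Wmax l j : b l j <= W.
Proof.
apply: leq_trans (leq_maxl _ _).
apply: leq_trans (leq_bigmax l); apply: leq_trans (leq_bigmax j); exact: leq_maxr.
Qed.

Lemma walk_weight_cat x p q :
  walk_weight x (p ++ q) =
  match walk_weight x p, walk_weight (last x p) q with
  | Some r1, Some r2 => Some (r1 + r2)
  | _, _ => None
  end.
Proof.
elim: p x => [|y p IH] x /=; first by case: walk_weight.
rewrite IH; case: edge => [e|]; case: (walk_weight y p) => [r|] //.
by case: walk_weight => // r2; rewrite addnA.
Qed.

Lemma walk_weight_zero_path x p :
  path (fun y z => edge y z == Some 0) x p -> walk_weight x p = Some 0.
Proof. by elim: p x => //= y p IH x /andP[/eqP-> /IH->]. Qed.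

Variable t : 'I_N.
Hypothesis t_last : t = N.-1 :> nat.

(* Lower bounds satisfied by the number [n] of edges and the weight [r] of any
   walk from [y] to w_(N-1): either the walk is heavy, or it follows the
   cheap route through the remaining layers and the hop count is bounded below
   by the path lengths that route has to cover. *)
Definition to_wlast_bound (y : vtx N M) (n r : nat) : Prop :=
  match y with
  | inl (inl (inl i)) =>
      (exists (i' j k : 'I_N) (l : 'I_M), i' + j + N + 2 <= n + i + k /\
         (5 * W - a l i') + (5 * W - b l j) + (5 * W + c k) <= r)
      \/ 15 * W <= r
  | inl (inl (inr j)) =>
      (exists k : 'I_N, j + N <= n + k /\ 5 * W + c k <= r) \/ 13 * W <= r
  | inl (inr k) => N.-1 <= n + k \/ 10 * W <= r
  | inr l =>
      (exists j k : 'I_N, j + N + 1 <= n + k /\ (5 * W - b l j) + (5 * W + c k) <= r)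
      \/ 17 * W <= r
  end.

Lemma to_wlast_bound_edge y z e n r :
  edge y z = Some e -> to_wlast_bound z n r -> to_wlast_bound y n.+1 (e + r).
Proof.
rewrite /edge /to_wlast_bound.
case: y => [[[i|j]|k]|l]; case: z => [[[i'|j']|k']|l'] //=.
- case: eqP => [succ|_]; last case: eqP => // succ; case=> <-;
    case=> [[i0 [j [k [l [hops wt]]]]]|heavy]; by [left; exists i0, j, k, l; lia|right; lia].
- case=> <-; have a_le := a_le_Wmax l' i.
  case=> [[j [k [hops wt]]]|heavy]; by [left; exists i, j, k, l'; lia|right; lia].
- case: eqP => [succ|_]; last case: eqP => // succ; case=> <-;
    case=> [[k [hops wt]]|heavy]; by [left; exists k; lia|right; lia].
- case: eqP => // j_eq0 [<-]; case=> hops; by [left; exists k'; lia|right; lia].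
- case=> <-; have b_le := b_le_Wmax l' j.
  case=> [[j0 [k [hops wt]]]|heavy]; right; [have := b_le_Wmax l' j0|]; lia.
- case: eqP => // j_eq0 [<-]; case=> [[k0 [hops wt]]|heavy]; right; lia.
- case: eqP => [succ|_]; last case: eqP => // succ; case=> <-;
    case=> hops; by [left; lia|right; lia].
- case=> <-; have a_le := a_le_Wmax l i'.
  case=> [[i0 [j [k [l0 [hops wt]]]]]|heavy]; right;
    [have := a_le_Wmax l0 i0; have := b_le_Wmax l0 j|]; lia.
- case=> <-; case=> [[k [hops wt]]|heavy];
    [left; exists j', k|right; have := b_le_Wmax l j']; lia.
Qed.

Lemma walk_to_wlast_bound y p r :
  last y p = wV M t -> walk_weight y p = Some r -> to_wlast_bound y (size p) r.
Proof.
elim: p y r => [|z p IH] y r /=; first by move=> -> [<-]; left; lia.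
case yz: (edge y z) => [e|] //; case zp: (walk_weight z p) => [r'|] // last_p [<-].
exact: to_wlast_bound_edge yz (IH _ _ last_p zp).
Qed.

Hypothesis HN : 0 < N.

Let u0 : vtx N M := uV M (Ordinal HN).

Lemma cheap_hop_path_quadruple p d :
  hop_path a b c u0 (wV M t) N.+2 p d -> d < 15 * W ->
  exists (i j k : 'I_N) (l : 'I_M), i + j <= k /\ c k < a l i + b l j.
Proof.
case=> _ last_p size_p wt_p cheap.
case: (walk_to_wlast_bound last_p wt_p) => [[i [j [k [l [hops wt]]]]]|]; last lia.
exists i, j, k, l; have := a_le_Wmax l i; have := b_le_Wmax l j; move: size_p hops => /=.
split; lia.
Qed.

(* Clamping a natural number into ['I_N]; the witness only uses indices below
   [N], where it is the identity. *)
Definition ord (m : nat) : 'I_N := insubd (Ordinal HN) m.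
Arguments ord : simpl never.

Lemma val_ord m : m < N -> ord m = m :> nat.
Proof. by move=> ltmN; rewrite /ord val_insubd ltmN. Qed.

Lemma ord_inj m m' : m < N -> m' < N -> ord m = ord m' -> m = m'.
Proof. by move=> ltm ltm' eq_ord; rewrite -(val_ord ltm) -(val_ord ltm') eq_ord. Qed.

Lemma ord_val (i : 'I_N) : ord i = i.
Proof. by apply: val_inj; rewrite /= val_ord. Qed.

Lemma u_succ_edge m : m.+1 < N -> edge (uV M (ord m)) (uV M (ord m.+1)) = Some 0.
Proof.
move=> ltmN; rewrite /edge /= !val_ord ?eqxx; [|lia..].
by case: eqP => //; lia.
Qed.

Lemma v_pred_edge m : m.+1 < N -> edge (vV M (ord m.+1)) (vV M (ord m)) = Some 0.
Proof. by move=> ltmN; rewrite /edge /= !val_ord ?eqxx //; lia. Qed.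

Lemma w_succ_edge m : m.+1 < N -> edge (wV M (ord m)) (wV M (ord m.+1)) = Some 0.
Proof.
move=> ltmN; rewrite /edge /= !val_ord ?eqxx; [|lia..].
by case: eqP => //; lia.
Qed.

Definition witness_path (i j k : nat) (l : 'I_M) : seq (vtx N M) :=
  [seq uV M (ord x) | x <- iota 1 i] ++ xV N l ::
  [seq vV M (ord x) | x <- j :: down j] ++ [seq wV M (ord x) | x <- k :: iota k.+1 (N.-1 - k)].

Lemma u0E : u0 = uV M (ord 0).
Proof. by congr uV; apply: val_inj; rewrite /= val_ord. Qed.

Lemma u_walk_weight m n :
  m + n < N -> walk_weight (uV M (ord m)) [seq uV M (ord x) | x <- iota m.+1 n] = Some 0.
Proof.
move=> lt_mn; apply: walk_weight_zero_path; rewrite (path_map (f := fun x => uV M (ord x))).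
by apply: path_iota => x /andP[_ ltx] /=; rewrite u_succ_edge //; lia.
Qed.

Lemma v_walk_weight j :
  j < N -> walk_weight (vV M (ord j)) [seq vV M (ord x) | x <- down j] = Some 0.
Proof.
move=> ltj; apply: walk_weight_zero_path; rewrite (path_map (f := fun x => vV M (ord x))).
by apply: path_down => x ltx /=; rewrite v_pred_edge //; lia.
Qed.

Lemma w_walk_weight m n :
  m + n < N -> walk_weight (wV M (ord m)) [seq wV M (ord x) | x <- iota m.+1 n] = Some 0.
Proof.
move=> lt_mn; apply: walk_weight_zero_path; rewrite (path_map (f := fun x => wV M (ord x))).
by apply: path_iota => x /andP[_ ltx] /=; rewrite w_succ_edge //; lia.
Qed.

Section Witness.

Variables (i j k : 'I_N) (l : 'I_M).

Lemma walk_weight_witness_path :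
  walk_weight u0 (witness_path i j k l) =
  Some ((5 * W - a l i) + (5 * W - b l j) + (5 * W + c k)).
Proof.
have ltiN := ltn_ord i; have ltjN := ltn_ord j; have ltkN := ltn_ord k.
rewrite /witness_path u0E walk_weight_cat u_walk_weight ?add0n //.
rewrite (last_map (fun x => uV M (ord x))) last_iota /= walk_weight_cat v_walk_weight //.
rewrite (last_map (fun x => vV M (ord x))) last_down /= w_walk_weight; last lia.
by rewrite /edge /= val_ord // !ord_val /= add0n addn0 addnA.
Qed.

Lemma last_witness_path : last u0 (witness_path i j k l) = wV M t.
Proof.
rewrite /witness_path last_cat /= last_cat /= (last_map (fun x => wV M (ord x))).
have ltkN := ltn_ord k; rewrite last_iota; congr wV; apply: val_inj; rewrite /= val_ord; lia.
Qed.

Lemma size_witness_path : size (witness_path i j k l) = i + j + (N - k) + 2.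
Proof.
rewrite /witness_path size_cat /= size_cat /= !size_map !size_iota size_down.
have := ltn_ord k; lia.
Qed.

End Witness.

Lemma uniq_map_ord (T : eqType) (f : 'I_N -> T) s :
  injective f -> uniq s -> {in s, forall x, x < N} -> uniq [seq f (ord x) | x <- s].
Proof.
move=> f_inj s_uniq s_lt; rewrite map_inj_in_uniq // => x y xs ys /f_inj.
exact: ord_inj (s_lt _ xs) (s_lt _ ys).
Qed.

Lemma uniq_witness_path (i j k : 'I_N) l : uniq (u0 :: witness_path i j k l).
Proof.
have ltiN := ltn_ord i; have ltjN := ltn_ord j; have ltkN := ltn_ord k.
rewrite u0E -cat_cons (_ : _ :: _ = [seq uV M (ord x) | x <- iota 0 i.+1]) // -cat1s.
rewrite !(@cat_uniq (vtx N M)) !has_cat has_seq1 !has_mem_map_ctor ?mem_map_ctor //.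
rewrite !uniq_map_ord //= ?mem_iota ?mem_down ?ltnn ?iota_uniq ?uniq_down ?andbF //.
all: try by move=> x y [].
all: try by move=> y; rewrite mem_map_ctor.
all: by move=> x; rewrite inE ?mem_iota ?mem_down => /predU1P[->|]; lia.
Qed.

Lemma hop_path_witness (i j k : 'I_N) l : i + j <= k ->
  hop_path a b c u0 (wV M t) N.+2 (witness_path i j k l)
    ((5 * W - a l i) + (5 * W - b l j) + (5 * W + c k)).
Proof.
move=> le_ijk; split; rewrite ?uniq_witness_path ?last_witness_path //.
  by rewrite size_witness_path; have := ltn_ord k; lia.
exact: walk_weight_witness_path.
Qed.

End Reduction.

Theorem mainTheorem8 (N M : nat) (HN : 1 <= N) (HM : 1 <= M)
    (a b : 'I_M -> 'I_N -> nat) (c : 'I_N -> nat) :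
  let u0 := uV M (Ordinal HN) in
  let wlast := @wV N M (Ordinal (eq_rect _ is_true HN _ (esym (ltn_predL N)))) in
  exists d, is_min_hop_dist a b c u0 wlast N.+2 d /\
    (d < 15 * Wmax a b c <->
     exists (i j k : 'I_N) (l : 'I_M), i + j <= k /\ c k < a l i + b l j).
Proof.
move=> u0 wlast.
pose t : 'I_N := Ordinal (eq_rect _ is_true HN _ (esym (ltn_predL N))).
have t_last : t = N.-1 :> nat by [].
have witness := hop_path_witness a b c t_last HN.
have [d [[p p_min] d_min]] : exists d, (exists p, hop_path a b c u0 wlast N.+2 p d) /\
    forall d', (exists p, hop_path a b c u0 wlast N.+2 p d') -> d <= d'.
  apply: ex_least_nat; eexists.
  exact: (witness (Ordinal HN) (Ordinal HN) (Ordinal HN) (Ordinal HM)).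
exists d; split; first by split; [exists p | move=> q d' q_hop; apply: d_min; exists q].
split; first exact: cheap_hop_path_quadruple p_min.
case=> [i [j [k [l [le_ijk lt_c]]]]].
have := d_min _ (ex_intro _ (witness_path HN i j k l) (witness i j k l le_ijk)).
have := a_le_Wmax a b c l i; have := b_le_Wmax a b c l j; lia.
Qed.
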